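(* Let $\mathsf{UnivT},\mathsf{StrongT},\mathsf{LexT},\mathsf{WeakT}$ denote the classes of universally truthful, strongly truthful, lex-truthful and weakly truthful randomized mechanisms, respectively. Then in every ordinal setting $\mathsf{UnivT}\subseteq\mathsf{StrongT}\subseteq\mathsf{LexT}\subseteq\mathsf{WeakT}$, and each of these inclusions is strict: for each inclusion there exists an ordinal setting (in which every agent may report any strict total order on the outcomes) and a mechanism belonging to the larger class but not the smaller one.
   Context: An ordinal setting: a set $N$ of $n$ agents, a finite set $O$ of $m$ outcomes, and for each agent $j$ a set $\Sigma_j$ of allowed strict total orders on $O$; $\Sigma=\prod_j\Sigma_j$. For a strict order $\succ$, $\succ(\ell)$ denotes its $\ell$-th ranked outcome. A deterministic mechanism (social choice function) $f:\Sigma\to O$ is truthful if $f(\succ_j,\succ_{-j})\succeq_j f(\succ'_j,\succ_{-j})$ for all $j$, all $\succ_j,\succ'_j\in\Sigma_j$, all $\succ_{-j}$ (where $a\succeq_j b$ means $a\succ_j b$ or $a=b$). A randomized mechanism maps each profile to a probability distribution (lottery) over $O$. It is universally truthful if it is a mixture of deterministic truthful mechanisms with input-independent mixture weights. For a strict order $\succ$ and lotteries $p,q$: $p$ stochastically dominates $q$ w.r.t. $\succ$ if $\sum_{\ell\le i}p(\succ(\ell))\ge\sum_{\ell\le i}q(\succ(\ell))$ for all $i\in[m]$; for $p\ne q$, $p$ lexicographically dominates $q$ w.r.t. $\succ$ if there is $i\in[m]$ with $p(\succ(i))>q(\succ(i))$ and $p(\succ(\ell))=q(\succ(\ell))$ for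 all $\ell<i$. A randomized mechanism $\mathcal{M}$ is strongly truthful if $\mathcal{M}(\succ_j,\succ_{-j})$ stochastically dominates $\mathcal{M}(\succ'_j,\succ_{-j})$ w.r.t. $\succ_j$ for all $j,\succ_j,\succ'_j,\succ_{-j}$; weakly truthful if $\mathcal{M}(\succ_j,\succ_{-j})$ is not stochastically dominated by $\mathcal{M}(\succ'_j,\succ_{-j})$ w.r.t. $\succ_j$ for all such data; lex-truthful if for all such data either $\mathcal{M}(\succ_j,\succ_{-j})=\mathcal{M}(\succ'_j,\succ_{-j})$ or $\mathcal{M}(\succ_j,\succ_{-j})$ lexicographically dominates $\mathcal{M}(\succ'_j,\succ_{-j})$ w.r.t. $\succ_j$. *)

From HB Require Import structures.
From mathcomp Require Import all_boot all_order all_algebra.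
From mathcomp Require Import reals.
Set Implicit Arguments. Unset Strict Implicit. Unset Printing Implicit Defensive.
Import Order.TTheory GRing.Theory Num.Theory.
Local Open Scope ring_scope.

(* A strict total order on the finite outcome set O (with m = #|O|) is
   represented by its ranking: an injective (hence bijective) map
   'I_m -> O sending l to the l-th ranked outcome  >(l)  (0-indexed). *)
Definition sorder (O : finType) := {f : {ffun 'I_#|O| -> O} | injectiveb f}.

Definition ranked (O : finType) (r : sorder O) (l : 'I_#|O|) : O := val r l.

Definition weakly_prefers (O : finType) (r : sorder O) (a b : O) : bool :=
  (a == b) || [exists l1 : 'I_#|O|, exists l2 : 'I_#|O|,
     [&& (l1 < l2)%N, ranked r l1 == a & ranked r l2 == b]].

Definition profile (n : nat) (O : finType) := {ffun 'I_n -> sorder O}.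

Definition upd n (O : finType) (s : profile n O) (j : 'I_n) (r : sorder O)
  : profile n O := [ffun i => if i == j then r else s i].

Definition in_setting n (O : finType) (Sg : 'I_n -> {set sorder O})
  (s : profile n O) : Prop := forall j, s j \in Sg j.

Definition full_setting n (O : finType) : 'I_n -> {set sorder O} :=
  fun _ => setT.

Definition lottery (R : realType) (O : finType) (p : {ffun O -> R}) : Prop :=
  (forall x, 0 <= p x) /\ \sum_(x : O) p x = 1.

Definition rand_mechanism (R : realType) n (O : finType)
  (Sg : 'I_n -> {set sorder O}) (M : profile n O -> {ffun O -> R}) : Prop :=
  forall s, in_setting Sg s -> lottery (M s).

Definition det_truthful n (O : finType) (Sg : 'I_n -> {set sorder O})
  (f : profile n O -> O) : Prop :=
  forall s, in_setting Sg s -> forall (j : 'I_n) (r' : sorder O), r' \in Sg j ->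
    weakly_prefers (s j) (f s) (f (upd s j r')).

Definition sd_dom (R : realType) (O : finType) (r : sorder O)
  (p q : {ffun O -> R}) : Prop :=
  forall i : 'I_#|O|,
    \sum_(l < #|O| | (l <= i)%N) q (ranked r l)
      <= \sum_(l < #|O| | (l <= i)%N) p (ranked r l).

Definition lex_dom (R : realType) (O : finType) (r : sorder O)
  (p q : {ffun O -> R}) : Prop :=
  p <> q /\
  exists i : 'I_#|O|, q (ranked r i) < p (ranked r i) /\
    forall l : 'I_#|O|, (l < i)%N -> p (ranked r l) = q (ranked r l).

Definition UnivT (R : realType) n (O : finType) (Sg : 'I_n -> {set sorder O})
  (M : profile n O -> {ffun O -> R}) : Prop :=
  rand_mechanism Sg M /\
  exists (k : nat) (w : 'I_k -> R) (f : 'I_k -> profile n O -> O),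
    [/\ (forall t, 0 <= w t), \sum_(t < k) w t = 1,
        (forall t, det_truthful Sg (f t)) &
        (forall s, in_setting Sg s -> forall x : O,
            M s x = \sum_(t < k | f t s == x) w t)].

Definition StrongT (R : realType) n (O : finType) (Sg : 'I_n -> {set sorder O})
  (M : profile n O -> {ffun O -> R}) : Prop :=
  rand_mechanism Sg M /\
  forall s, in_setting Sg s -> forall (j : 'I_n) (r' : sorder O), r' \in Sg j ->
    sd_dom (s j) (M s) (M (upd s j r')).

Definition LexT (R : realType) n (O : finType) (Sg : 'I_n -> {set sorder O})
  (M : profile n O -> {ffun O -> R}) : Prop :=
  rand_mechanism Sg M /\
  forall s, in_setting Sg s -> forall (j : 'I_n) (r' : sorder O), r' \in Sg j ->
    M s = M (upd s j r') \/ lex_dom (s j) (M s) (M (upd s j r')).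

Definition WeakT (R : realType) n (O : finType) (Sg : 'I_n -> {set sorder O})
  (M : profile n O -> {ffun O -> R}) : Prop :=
  rand_mechanism Sg M /\
  forall s, in_setting Sg s -> forall (j : 'I_n) (r' : sorder O), r' \in Sg j ->
    ~ (sd_dom (s j) (M (upd s j r')) (M s) /\ M (upd s j r') <> M s).

(* Everything is read off the cumulative probabilities of the top-i outcomes of the
   true order.  A universally truthful mechanism is a fixed mixture of truthful
   deterministic ones; each component moves its outcome weakly up the true order
   when the agent tells the truth, so every cumulative probability can only grow.
   If p stochastically dominates q and p <> q, then at the first rank where they
   differ p must be the larger, which is lexicographic dominance; conversely
   lexicographic dominance of p over q at rank i contradicts q stochastically
   dominating p at rank i.
   The strictness witnesses have one agent and three outcomes.  The uniform lottery
   on the reported top two is strongly truthful, but a truthful deterministic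
   mechanism selects the second-ranked outcome for at most one of the three cyclic
   rotations of 0 > 1 > 2, so no mixture gives it probability 1/2 for all three.
   A lottery determined by the reported top outcome, giving that outcome more mass
   than any other report does, is lex-truthful; and a two-valued mechanism keyed on
   whether 1 is reported among the top two is weakly but not lex-truthful. *)

From HB Require Import structures.
From mathcomp Require Import all_boot all_order all_algebra.
From mathcomp Require Import reals.
From mathcomp Require Import lra zify.
Set Implicit Arguments. Unset Strict Implicit. Unset Printing Implicit Defensive.
Import Order.TTheory GRing.Theory Num.Theory.
Local Open Scope ring_scope.

Lemma ler_sum_subpred (R : numDomainType) (I : finType) (P Q : pred I)
    (F : I -> R) :
  (forall i, 0 <= F i) -> {subset P <= Q} ->
  \sum_(i | P i) F i <= \sum_(i | Q i) F i.
Proof.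
move=> F_ge0 PQ; rewrite [X in _ <= X](bigID P) /=.
rewrite (eq_bigl P) ?lerDl ?sumr_ge0 // => i.
by apply/andP/idP => [[]//|Pi]; split => //; exact: PQ.
Qed.

Section Rankings.
Variable O : finType.
Implicit Types (r : sorder O) (x y : O).

Lemma ranked_inj r : injective (ranked r).
Proof. by case: r => f f_inj; apply/injectiveP. Qed.

Lemma ranked_bij r : bijective (ranked r).
Proof. by have := inj_card_bij (@ranked_inj r); rewrite card_ord; apply. Qed.

Definition rank_of r x : nat :=
  if [pick l | ranked r l == x] is Some l then val l else 0%N.

Lemma rank_of_ranked r l : rank_of r (ranked r l) = l.
Proof.
rewrite /rank_of; case: pickP => [l' /eqP /ranked_inj -> //|].
by move/(_ l); rewrite eqxx.
Qed.

Lemma rank_of_lt r x : (rank_of r x < #|O|)%N.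
Proof. by have [g _ /(_ x) <-] := ranked_bij r; rewrite rank_of_ranked. Qed.

Lemma rank_of_inj r : injective (rank_of r).
Proof.
have [g gK Kg] := ranked_bij r.
by move=> x y; rewrite -[x]Kg -[y]Kg !rank_of_ranked => /val_inj ->.
Qed.

Lemma weakly_prefers_rank r x y :
  weakly_prefers r x y -> (rank_of r x <= rank_of r y)%N.
Proof.
case/orP => [/eqP -> //|/existsP [l1 /existsP [l2 /and3P [lt12 /eqP <- /eqP <-]]]].
by rewrite !rank_of_ranked ltnW.
Qed.

End Rankings.

Section Cumulative.
Variables (R : realType) (O : finType).
Implicit Types (r : sorder O) (p q : {ffun O -> R}) (i : 'I_#|O|).

Definition cumul r p i : R := \sum_(l < #|O| | (l <= i)%N) p (ranked r l).

Lemma sum_ranked r (P : pred nat) (F : O -> R) :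
  \sum_(l < #|O| | P l) F (ranked r l) = \sum_(x | P (rank_of r x)) F x.
Proof.
have [g gK Kg] := ranked_bij r.
rewrite (reindex (ranked r)) /=; last by exists g => x _.
by apply: eq_bigl => l; rewrite rank_of_ranked.
Qed.

Lemma cumulE r p i : cumul r p i = \sum_(x | (rank_of r x <= i)%N) p x.
Proof. exact: (sum_ranked r (fun l => l <= i)%N). Qed.

Lemma cumul_split r p i :
  cumul r p i = \sum_(l < #|O| | (l < i)%N) p (ranked r l) + p (ranked r i).
Proof.
rewrite /cumul (bigD1 i) //= addrC; congr (_ + _); apply: eq_bigl => l.
by rewrite ltn_neqAle andbC val_eqE.
Qed.

Lemma ler_cumul_agree r p q i :
    (forall l : 'I_#|O|, (l < i)%N -> p (ranked r l) = q (ranked r l)) ->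
  (cumul r q i <= cumul r p i) = (q (ranked r i) <= p (ranked r i)).
Proof.
move=> pq_below; rewrite !cumul_split.
by under eq_bigr => l /pq_below <- do []; rewrite lerD2l.
Qed.

Lemma sd_dom_lex_dom r p q : sd_dom r p q -> p <> q -> lex_dom r p q.
Proof.
move=> pq_sd /eqP pq; split; first exact/eqP.
pose P l := p (ranked r l) != q (ranked r l).
have [l0 Pl0] : exists l, P l.
  apply/existsP; apply: contraNT pq; rewrite negb_exists => /forallP pq.
  apply/eqP/ffunP => x; have [g _ /(_ x) <-] := ranked_bij r.
  exact/eqP/negPn/pq.
have [i /negbTE Pi i_min] := arg_minnP val Pl0.
have agree (l : 'I_#|O|) : (l < i)%N -> p (ranked r l) = q (ranked r l).
  by move=> li; apply/eqP/negPn/negP => /i_min; rewrite leqNgt li.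
exists i; split => //.
by rewrite lt_def -ler_cumul_agree // pq_sd andbT Pi.
Qed.

Lemma lex_dom_not_sd_dom r p q : lex_dom r p q -> ~ sd_dom r q p.
Proof.
case=> _ [i [qp agree]] /(_ i); rewrite ler_cumul_agree; last first.
  by move=> l /agree ->.
by rewrite leNgt qp.
Qed.

End Cumulative.

Section Mixtures.
Variables (R : realType) (O : finType) (k : nat) (w : 'I_k -> R).
Implicit Types (r : sorder O) (f g : 'I_k -> O) (p q : {ffun O -> R}).

Definition mixture_of p f := forall x, p x = \sum_(t | f t == x) w t.

Lemma cumul_mixture r p f i :
  mixture_of p f -> cumul r p i = \sum_(t | (rank_of r (f t) <= i)%N) w t.
Proof.
move=> pf; rewrite cumulE (partition_big f (fun x => rank_of r x <= i)%N) //.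
apply: eq_bigr => x ri; rewrite pf; apply: eq_bigl => t.
by case: eqP => [->|]; rewrite ?ri ?andbF.
Qed.

Lemma sd_dom_mixture r p q f g :
    (forall t, 0 <= w t) -> (forall t, weakly_prefers r (f t) (g t)) ->
  mixture_of p f -> mixture_of q g -> sd_dom r p q.
Proof.
move=> w_ge0 fg pf qg i; rewrite -!/(cumul r _ i).
rewrite (cumul_mixture _ _ qg) (cumul_mixture _ _ pf).
apply: ler_sum_subpred => // t /(leq_trans _); apply.
exact: weakly_prefers_rank.
Qed.

End Mixtures.

Section Inclusions.
Variables (R : realType) (n : nat) (O : finType) (Sg : 'I_n -> {set sorder O}).
Implicit Types (M : profile n O -> {ffun O -> R}).

Lemma in_setting_upd s j r' :
  in_setting Sg s -> r' \in Sg j -> in_setting Sg (upd s j r').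
Proof. by move=> s_in r'_in i; rewrite ffunE; case: eqP => [->|]. Qed.

Lemma UnivT_StrongT M : UnivT Sg M -> StrongT Sg M.
Proof.
case=> M_rand [k [w [f [w_ge0 _ f_truthful M_mix]]]].
split=> // s s_in j r' r'_in.
apply: (sd_dom_mixture (f := f^~ s) (g := f^~ (upd s j r'))) => //.
- by move=> t; apply: f_truthful.
- exact: M_mix.
- exact/M_mix/in_setting_upd.
Qed.

Lemma StrongT_LexT M : StrongT Sg M -> LexT Sg M.
Proof.
case=> M_rand M_sd; split => // s s_in j r' r'_in.
have [->|ne] := eqVneq (M s) (M (upd s j r')); first by left.
by right; apply: sd_dom_lex_dom; [apply: M_sd | apply/eqP].
Qed.

Lemma LexT_WeakT M : LexT Sg M -> WeakT Sg M.
Proof.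
case=> M_rand M_lex; split => // s s_in j r' r'_in [sd ne].
case: (M_lex s s_in j r' r'_in) => [eq|lex]; first exact: ne.
exact: lex_dom_not_sd_dom lex sd.
Qed.

End Inclusions.

Section Lotteries.
Variables (R : realType) (O : finType).
Implicit Types (r : sorder O) (a b : O) (p q : {ffun O -> R}).

Definition dirac a : {ffun O -> R} := [ffun x => (x == a)%:R].

Definition midpoint p q : {ffun O -> R} := [ffun x => (p x + q x) / 2].

Lemma lottery_dirac a : lottery (dirac a).
Proof.
split=> [x|]; first by rewrite ffunE ler0n.
by rewrite (bigD1 a) //= big1 => [|x /negbTE xa]; rewrite ffunE ?eqxx ?xa ?addr0.
Qed.

Lemma lottery_midpoint p q : lottery p -> lottery q -> lottery (midpoint p q).
Proof.
case=> p_ge0 p1 [q_ge0 q1]; split=> [x|].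
  by rewrite ffunE divr_ge0 ?addr_ge0.
under eq_bigr do rewrite ffunE.
rewrite -mulr_suml big_split /= p1 q1; lra.
Qed.

Lemma cumul_dirac r a i : cumul r (dirac a) i = (rank_of r a <= i)%N%:R.
Proof.
rewrite cumulE; have [ai|nai] := boolP (rank_of r a <= i)%N.
  rewrite (bigD1 a) //= big1 => [|x /andP [_ /negbTE xa]]; rewrite ffunE ?eqxx ?xa //.
  by rewrite addr0.
by rewrite big1 // => x xi; rewrite ffunE; case: eqP xi => // ->; rewrite (negbTE nai).
Qed.

Lemma cumul_midpoint r p q i :
  cumul r (midpoint p q) i = (cumul r p i + cumul r q i) / 2.
Proof.
by rewrite /cumul -big_split /= mulr_suml; apply: eq_bigr => l _; rewrite ffunE.
Qed.

Lemma cumul_le1 r p i : lottery p -> cumul r p i <= 1.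
Proof. by case=> p_ge0 <-; rewrite cumulE; apply: ler_sum_subpred. Qed.

Lemma lex_dom_top r p q (i : 'I_#|O|) :
  val i = 0%N -> q (ranked r i) < p (ranked r i) -> lex_dom r p q.
Proof.
move=> i0 qp; split; last by exists i; split=> // l; rewrite i0.
by move=> pq; rewrite pq ltxx in qp.
Qed.

Lemma not_lex_dom_top r p q (i : 'I_#|O|) :
  val i = 0%N -> p (ranked r i) < q (ranked r i) -> ~ lex_dom r p q.
Proof.
move=> i0 pq [_ [l [qp agree]]]; have [l0|lpos] := posnP l.
  have il : i = l by apply/val_inj; rewrite /= i0 l0.
  by move: qp; rewrite -il ltNge ltW.
by move: pq; rewrite agree ?i0 // ltxx.
Qed.

End Lotteries.

Lemma in_full_setting n (O : finType) (s : profile n O) :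
  in_setting (@full_setting n O) s.
Proof. by move=> j; rewrite in_setT. Qed.

Section SingleAgent.
Variables (R : realType) (O : finType).
Implicit Types (r : sorder O).

Definition single r : profile 1 O := [ffun=> r].

Definition by_report (L : sorder O -> {ffun O -> R}) (s : profile 1 O) : {ffun O -> R} :=
  L (s ord0).

Lemma upd_single (s : profile 1 O) j r' : upd s j r' = single r'.
Proof. by apply/ffunP => i; rewrite !ffunE (ord1 i) (ord1 j) eqxx. Qed.

Variable L : sorder O -> {ffun O -> R}.

Lemma by_report_single r : by_report L (single r) = L r.
Proof. by rewrite /by_report ffunE. Qed.

Lemma by_reportP (P : sorder O -> {ffun O -> R} -> {ffun O -> R} -> Prop) :
  (forall r r', P r (L r) (L r')) <->
  (forall s, in_setting (@full_setting 1 O) s ->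
     forall j r', r' \in @full_setting 1 O j ->
     P (s j) (by_report L s) (by_report L (upd s j r'))).
Proof.
split=> [PL s _ j r' _ | Pfull r r'].
  by rewrite /by_report upd_single ffunE (ord1 j); apply: PL.
have := Pfull (single r) (in_full_setting _) ord0 r' (in_setT _).
by rewrite /by_report upd_single !ffunE.
Qed.

Hypothesis L_lottery : forall r, lottery (L r).

Lemma by_report_rand : rand_mechanism (@full_setting 1 O) (by_report L).
Proof. by move=> s _; apply: L_lottery. Qed.

Lemma StrongT_by_report :
  StrongT (@full_setting 1 O) (by_report L) <-> forall r r', sd_dom r (L r) (L r').
Proof.
rewrite /StrongT (by_reportP (@sd_dom R O)).
by split=> [[]//|]; split=> //; apply: by_report_rand.
Qed.

Lemma LexT_by_report :
  LexT (@full_setting 1 O) (by_report L) <->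
  forall r r', L r = L r' \/ lex_dom r (L r) (L r').
Proof.
rewrite /LexT (by_reportP (fun r p q => p = q \/ lex_dom r p q)).
by split=> [[]//|]; split=> //; apply: by_report_rand.
Qed.

Lemma WeakT_by_report :
  WeakT (@full_setting 1 O) (by_report L) <->
  forall r r', ~ (sd_dom r (L r') (L r) /\ L r' <> L r).
Proof.
rewrite /WeakT (by_reportP (fun r p q => ~ (sd_dom r q p /\ q <> p))).
by split=> [[]//|]; split=> //; apply: by_report_rand.
Qed.

End SingleAgent.

Section Rotations.
Local Notation O := ('I_3 : finType).

(* Positions live in 'I_#|O|, and #|'I_3| is only propositionally equal to 3. *)
Definition pos (x : O) : 'I_#|O| := cast_ord (esym (card_ord 3)) x.

Definition rotation_fun (k : O) : {ffun 'I_#|O| -> O} :=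
  [ffun l => cast_ord (card_ord 3) l + k].

Lemma rotation_inj k : injectiveb (rotation_fun k).
Proof. by apply/injectiveP => l1 l2; rewrite !ffunE => /addIr /cast_ord_inj. Qed.

Definition rot k : sorder O := exist _ (rotation_fun k) (rotation_inj k).

Lemma ranked_rot k x : ranked (rot k) (pos x) = x + k.
Proof. by rewrite /ranked /= ffunE cast_ordKV. Qed.

Lemma rank_of_rot k x : rank_of (rot k) x = x - k :> nat.
Proof. by rewrite -{1}(subrK k x) -[in LHS]ranked_rot rank_of_ranked. Qed.

End Rotations.

Section Examples.
Variable R : realType.
Local Notation O := ('I_3 : finType).
Local Notation full := (@full_setting 1 O).
Implicit Types (r : sorder O) (c : O).

Definition top_two r : {ffun O -> R} :=
  midpoint (dirac R (ranked r (pos 0))) (dirac R (ranked r (pos 1))).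

Lemma lottery_top_two r : lottery (top_two r).
Proof. exact/lottery_midpoint/lottery_dirac/lottery_dirac. Qed.

Lemma top_two_sd_dom r r' : sd_dom r (top_two r) (top_two r').
Proof.
move=> i; rewrite -!/(cumul r _ i); have [i0|ipos] := posnP i.
  rewrite !cumul_midpoint !cumul_dirac !rank_of_ranked i0 /=.
  have : rank_of r (ranked r' (pos 0)) != rank_of r (ranked r' (pos 1)).
    by rewrite (inj_eq (@rank_of_inj _ r)) (inj_eq (@ranked_inj _ r')).
  by case: (rank_of _ _) (rank_of _ _) => [|a] [|b] //= _; lra.
rewrite [X in _ <= X]cumul_midpoint !cumul_dirac !rank_of_ranked ipos /=.
have := cumul_le1 r i (lottery_top_two r'); lra.
Qed.

Lemma top_two_StrongT : StrongT full (by_report top_two).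
Proof.
by apply/(StrongT_by_report lottery_top_two); apply: top_two_sd_dom.
Qed.

(* The second outcome 1 + (c + 2) of rot (c + 2) is the top outcome c of rot c. *)
Lemma det_truthful_second_rot (f : profile 1 O -> O) c :
    det_truthful full f -> f (single (rot c)) = 1 + c ->
  f (single (rot (c + 2))) != 1 + (c + 2).
Proof.
have c2 : 1 + (c + 2) = c.
  by rewrite addrCA; case: c => [[|[|[|]]] ?] //; apply/val_inj.
move=> f_truthful fc; rewrite c2; apply/eqP => fc2.
have := f_truthful _ (in_full_setting (single (rot c))) ord0 (rot (c + 2)) (in_setT _).
rewrite upd_single ffunE fc fc2 => /weakly_prefers_rank.
by rewrite !rank_of_rot addrK subrr.
Qed.

Lemma top_two_second c : top_two (rot c) (1 + c) = 1 / 2.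
Proof.
rewrite ffunE !ffunE !ranked_rot add0r eqxx.
have -> : (1 + c == c) = false by case: c => [[|[|[|]]] ?].
rewrite /=; lra.
Qed.

Lemma top_two_not_UnivT : ~ UnivT full (by_report top_two).
Proof.
case=> _ [k [w [f [w_ge0 w1 f_truthful M_mix]]]].
pose A (t : 'I_k) : pred O := fun c => f t (single (rot c)) == 1 + c.
have A_excl t c : A t c -> ~~ A t (c + 2).
  by move=> /eqP; apply: det_truthful_second_rot.
have A_le1 t : (#|A t| <= 1)%N.
  apply/card_le1_eqP => c c' Ac Ac'.
  have [c'E|] := eqVneq c' (c + 2).
    by case/negP: (A_excl t c Ac); rewrite -c'E.
  have [cE|] := eqVneq c (c' + 2).
    by case/negP: (A_excl t c' Ac'); rewrite -cE.
  by move: c c' {Ac Ac'} => [[|[|[|//]]] ?] [[|[|[|//]]] ?] // _ _; apply/val_inj.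
have A_mass c : \sum_(t | A t c) w t = 1 / 2.
  by rewrite -(top_two_second c) -(M_mix _ (in_full_setting _)) by_report_single.
have : \sum_(c : O) \sum_(t | A t c) w t <= 1.
  rewrite -w1 (exchange_big_dep xpredT) //=; apply: ler_sum => t _.
  rewrite sumr_const -[X in _ <= X]mulr1n.
  exact: ler_wpMn2l (w_ge0 t) _ _ (A_le1 t).
rewrite (eq_bigr _ (fun c _ => A_mass c)) sumr_const card_ord; lra.
Qed.

Definition peak t : {ffun O -> R} :=
  if t == 0 then midpoint (dirac R 0) (dirac R 2) else dirac R t.

Lemma lottery_peak t : lottery (peak t).
Proof.
rewrite /peak; case: ifP => _; last exact: lottery_dirac.
exact/lottery_midpoint/lottery_dirac/lottery_dirac.
Qed.

Lemma peak_lt t t' : t != t' -> peak t' t < peak t t.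
Proof.
by case: t t' => [[|[|[|//]]] ?] [[|[|[|//]]] ?] //= _; rewrite !ffunE /=; lra.
Qed.

Definition by_top r := peak (ranked r (pos 0)).

Lemma by_top_LexT : LexT full (by_report by_top).
Proof.
apply/(LexT_by_report (fun r => lottery_peak _)) => r r'; rewrite /by_top.
have [->|tt'] := eqVneq (ranked r (pos 0)) (ranked r' (pos 0)); first by left.
by right; apply: (lex_dom_top (i := pos 0)) => //; apply: peak_lt.
Qed.

Lemma by_top_not_StrongT : ~ StrongT full (by_report by_top).
Proof.
move/(StrongT_by_report (fun r => lottery_peak _))/(_ (rot 0) (rot 1) (pos 1)).
rewrite -!/(cumul (rot 0) _ (pos 1)) /by_top !ranked_rot /peak /=.
rewrite cumul_midpoint !cumul_dirac !rank_of_rot /=; lra.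
Qed.

Definition one_in_top_two r := peak (if (rank_of r 1%R <= 1)%N then 1 else 0).

Lemma one_in_top_two_WeakT : WeakT full (by_report one_in_top_two).
Proof.
apply/(WeakT_by_report (fun r => lottery_peak _)) => r r' [sd ne].
have r_lt x : (rank_of r x < 3)%N by have := rank_of_lt r x; rewrite card_ord.
have r_neq x y : x != y -> rank_of r x != rank_of r y.
  by move=> xy; rewrite (inj_eq (@rank_of_inj _ r)).
move: sd ne; rewrite /one_in_top_two; case: ifP => h'; case: ifP => h //= sd _.
- have := sd (pos 1); rewrite -!/(cumul r _ (pos 1)) /peak /=.
  rewrite cumul_midpoint !cumul_dirac /= h modn_small //.
  have := r_neq 0 1 isT; have := r_neq 1 2 isT.
  have := r_lt 0; have := r_lt 1; have := r_lt 2.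
  by case: (leqP (rank_of r 0) 1); case: (leqP (rank_of r 2%R) 1) => /= *;
    first [lra | lia].
- have := sd (Ordinal (rank_of_lt r 1)); rewrite -!/(cumul r _ _) /peak /=.
  rewrite cumul_midpoint !cumul_dirac /= leqnn.
  have := r_neq 0 1 isT; have := r_neq 1 2 isT; have := r_neq 0 2 isT.
  by case: (leqP (rank_of r 0) (rank_of r 1));
    case: (leqP (rank_of r 2%R) (rank_of r 1)) => /= *; first [lra | lia].
Qed.

(* Truth 0 > 1 > 2 gets the point mass on 1; reporting 2 > 0 > 1 puts 1/2 on 0. *)
Lemma one_in_top_two_not_LexT : ~ LexT full (by_report one_in_top_two).
Proof.
move/(LexT_by_report (fun r => lottery_peak _))/(_ (rot 0) (rot 2)).
rewrite /one_in_top_two !rank_of_rot /peak /=.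
have below : dirac R 1 (ranked (rot 0) (pos 0)) <
             midpoint (dirac R 0) (dirac R 2) (ranked (rot 0) (pos 0)).
  by rewrite ranked_rot !ffunE /=; lra.
case=> [eq|]; last exact: not_lex_dom_top below.
by rewrite eq ltxx in below.
Qed.

End Examples.

Theorem theorem3 (R : realType) :
  (* the inclusions hold in every ordinal setting *)
  (forall n (O : finType) (Sg : 'I_n -> {set sorder O})
          (M : profile n O -> {ffun O -> R}),
     UnivT Sg M -> StrongT Sg M) /\
  (forall n (O : finType) (Sg : 'I_n -> {set sorder O})
          (M : profile n O -> {ffun O -> R}),
     StrongT Sg M -> LexT Sg M) /\
  (forall n (O : finType) (Sg : 'I_n -> {set sorder O})
          (M : profile n O -> {ffun O -> R}),
     LexT Sg M -> WeakT Sg M) /\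
  (* each inclusion is strict, witnessed in a full setting *)
  (exists n (O : finType) (M : profile n O -> {ffun O -> R}),
     StrongT (@full_setting n O) M /\ ~ UnivT (@full_setting n O) M) /\
  (exists n (O : finType) (M : profile n O -> {ffun O -> R}),
     LexT (@full_setting n O) M /\ ~ StrongT (@full_setting n O) M) /\
  (exists n (O : finType) (M : profile n O -> {ffun O -> R}),
     WeakT (@full_setting n O) M /\ ~ LexT (@full_setting n O) M).
Proof.
split; first exact: UnivT_StrongT.
split; first exact: StrongT_LexT.
split; first exact: LexT_WeakT.
split; first by exists 1%N, 'I_3, (by_report (@top_two R));
  split; [exact: top_two_StrongT | exact: top_two_not_UnivT].
split; first by exists 1%N, 'I_3, (by_report (@by_top R));
  split; [exact: by_top_LexT | exact: by_top_not_StrongT].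
by exists 1%N, 'I_3, (by_report (@one_in_top_two R));
  split; [exact: one_in_top_two_WeakT | exact: one_in_top_two_not_LexT].
Qed.
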